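(* For mv-ATL$_\to$, memory is irrelevant, i.e., its semantics can be equivalently given by memoryless strategies.
   Context: Let $\mathcal{L}=(L,\leq)$ be a finite distributive lattice with meet $\sqcap$, join $\sqcup$, least element $\bot$ and greatest element $\top$; for a family of elements, $\inf$ denotes its greatest lower bound (lattice meet) and $\bigsqcup$ its least upper bound (lattice join). A multi-valued concurrent game structure (mv-CGS) over $\mathcal{L}$ is a concurrent game structure $\langle \mathrm{Agt},Q,Act,d,t,AP,V,(L,\leq,\sigma)\rangle$ whose valuation $V:AP\times Q\to L$ assigns lattice values to atomic propositions at states (perfect information). mv-ATL$_\to$ has formulas $\varphi::=c\mid p\mid\varphi\wedge\varphi\mid\varphi\vee\varphi\mid\varphi\to\varphi\mid\langle\!\langle A\rangle\!\rangle X\varphi\mid\langle\!\langle A\rangle\!\rangle\varphi U\varphi\mid\langle\!\langle A\rangle\!\rangle\varphi W\varphi$ (and the dual $[\![A]\!]$ forms), interpreted with $\wedge,\vee$ as $\sqcap,\sqcup$, $[\![\langle\!\langle A\rangle\!\rangle\gamma]\!]_{M,q}=\bigsqcup_{s_A\in\Sigma_A}\inf_{\lambda\in out(q,s_A)}[\![\gamma]\!]_{M,\lambda}$, $[\![[\![A]\!]\gamma]\!]_{M,q}=\inf_{s_A\in\Sigma_A}\bigsqcup_{\lambda\in out(q,s_A)}[\![\gamma]\!]_{M,\lambda}$, $[\![\varphi_1 U\varphi_2]\!]_{M,\lambda}=\bigsqcup_{i\ge 0}\inf_{0\le j<i}\{[\![\varphi_2]\!]_{M,\lambda[i]}\sqcap[\![\varphi_1]\!]_{M,\lambda[j]}\}$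 (analogously for $X$, $W$), and $[\![\varphi_1\to\varphi_2]\!]_{M,q}=\top$ if $[\![\varphi_1]\!]_{M,q}\le[\![\varphi_2]\!]_{M,q}$ and $\bot$ otherwise. $\Sigma_A$ is either the set of perfect recall strategies ($s_a:Q^+\to Act$) or the set of memoryless strategies ($s_a:Q\to Act$), with $s_a$ choosing actions available to $a$. The claim is that both choices of $\Sigma_A$ give the same valuation. This follows from a reduction of multi-valued model checking to 2-valued model checking (via threshold functions on join-irreducible elements, plus fresh propositions for implication subformulas) that is correct independently of the strategy type, together with the fact that perfect recall and memoryless semantics coincide in 2-valued ATL. *)

From Stdlib Require Import ClassicalEpsilon.
From mathcomp Require Import all_boot all_order.

Set Implicit Arguments.
Unset Strict Implicit.
Unset Printing Implicit Defensive.

Import Order.Theory.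
Local Open Scope order_scope.

Definition pb (P : Prop) : bool :=
  if excluded_middle_informative P then true else false.

Section MvATL.
Context {disp : Order.disp_t} (L : finTBDistrLatticeType disp).

Definition Lsup (I : Type) (f : I -> L) : L :=
  \join_(x : L | pb (exists i, f i = x)) x.
Definition Linf (I : Type) (f : I -> L) : L :=
  \meet_(x : L | pb (exists i, f i = x)) x.

Record mvCGS := MvCGS {
  Agt : finType;
  St : finType;
  Act : finType;
  AP : Type;
  avail : Agt -> St -> {set Act};
  avail_nonempty : forall a q, avail a q != set0;
  trans : St -> (Agt -> Act) -> St;
  V : AP -> St -> L
}.

Inductive formula (AProp : Type) (Ag : finType) : Type :=
| FConst of L
| FProp of AProp
| FAnd of formula AProp Ag & formula AProp Ag
| FOr of formula AProp Ag & formula AProp Ag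
| FImp of formula AProp Ag & formula AProp Ag
| DiaX of {set Ag} & formula AProp Ag
| DiaU of {set Ag} & formula AProp Ag & formula AProp Ag
| DiaW of {set Ag} & formula AProp Ag & formula AProp Ag
| BoxX of {set Ag} & formula AProp Ag
| BoxU of {set Ag} & formula AProp Ag & formula AProp Ag
| BoxW of {set Ag} & formula AProp Ag & formula AProp Ag.

Variable M : mvCGS.

(* Histories Q^+ : a nonempty sequence (q0, [q1; ...; qn]). *)
Definition hist := (St M * seq (St M))%type.
Definition hlast (h : hist) : St M := last h.1 h.2.

(* Collective strategy for a coalition: one history-based function per agent
   (only the components for agents of the coalition are relevant). *)
Definition strat := Agt M -> hist -> Act M.

Definition pr_strat (A : {set Agt M}) (s : strat) : Prop :=
  forall a, a \in A -> forall h, s a h \in avail a (hlast h).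

(* Memoryless strategies s_a : Q -> Act, viewed as history-based functions
   that only look at the last state. *)
Definition ml_strat (A : {set Agt M}) (s : strat) : Prop :=
  exists m : Agt M -> St M -> Act M,
    (forall a, a \in A -> forall q, m a q \in avail a q) /\
    s = (fun a h => m a (hlast h)).

Inductive strat_kind := PerfectRecall | Memoryless.

Definition is_strat (k : strat_kind) (A : {set Agt M}) (s : strat) : Prop :=
  match k with
  | PerfectRecall => pr_strat A s
  | Memoryless => ml_strat A s
  end.

Definition prefix (l : nat -> St M) (i : nat) : hist :=
  (l 0, [seq l j.+1 | j <- iota 0 i]).

Definition out (q : St M) (A : {set Agt M}) (s : strat) (l : nat -> St M)
  : Prop :=
  l 0 = q /\
  forall i, exists alpha : Agt M -> Act M,
    (forall a, alpha a \in avail a (l i)) /\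
    (forall a, a \in A -> alpha a = s a (prefix l i)) /\
    l i.+1 = trans (l i) alpha.

Definition Dia (k : strat_kind) (A : {set Agt M}) (g : (nat -> St M) -> L)
  (q : St M) : L :=
  Lsup (fun s : {s : strat | is_strat k A s} =>
    Linf (fun l : {l : nat -> St M | out q A (proj1_sig s) l} =>
      g (proj1_sig l))).

Definition Box (k : strat_kind) (A : {set Agt M}) (g : (nat -> St M) -> L)
  (q : St M) : L :=
  Linf (fun s : {s : strat | is_strat k A s} =>
    Lsup (fun l : {l : nat -> St M | out q A (proj1_sig s) l} =>
      g (proj1_sig l))).

Definition pX (f : St M -> L) (l : nat -> St M) : L := f (l 1%N).
Definition pU (f1 f2 : St M -> L) (l : nat -> St M) : L :=
  Lsup (fun i : nat => f2 (l i) `&` Linf (fun j : 'I_i => f1 (l j))).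
Definition pW (f1 f2 : St M -> L) (l : nat -> St M) : L :=
  pU f1 f2 l `|` Linf (fun i : nat => f1 (l i)).

Fixpoint eval (k : strat_kind) (phi : formula (AP M) (Agt M)) : St M -> L :=
  match phi with
  | FConst c => fun _ => c
  | FProp p => V p
  | FAnd a b => fun q => eval k a q `&` eval k b q
  | FOr a b => fun q => eval k a q `|` eval k b q
  | FImp a b => fun q => if eval k a q <= eval k b q then \top else \bot
  | DiaX A a => Dia k A (pX (eval k a))
  | DiaU A a b => Dia k A (pU (eval k a) (eval k b))
  | DiaW A a b => Dia k A (pW (eval k a) (eval k b))
  | BoxX A a => Box k A (pX (eval k a))
  | BoxU A a b => Box k A (pU (eval k a) (eval k b))
  | BoxW A a b => Box k A (pW (eval k a) (eval k b))
  end.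

End MvATL.

(* In a finite distributive lattice an element is determined by the join-prime
   elements below it, and a join-prime lies below a join iff it lies below one of
   its terms.  So j <= [[<<A>> gamma]] iff A can enforce the two-valued path property
   "j <= [[gamma]]", and j <= [[ [[A]] gamma ]] iff A cannot enforce its negation.
   For X, U, W and their negations (which are again of this form) memoryless
   strategies suffice: for X replay the first move; for W stay inside the
   perfect-recall winning region, which is closed under the controllable
   predecessor; for U descend the layers of the attractor, which contains every
   perfect-recall winning state since otherwise the opponent could stay outside it. *)

From Pilot Require Import Defs.
From mathcomp Require Import all_boot all_order.
From Stdlib Require Import Classical ClassicalEpsilon FunctionalExtensionality.

Set Implicit Arguments.
Unset Strict Implicit.
Unset Printing Implicit Defensive.

Import Order.Theory.

Lemma pbP (P : Prop) : reflect P (pb P).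
Proof. by rewrite /pb; case: excluded_middle_informative => h; constructor. Qed.

Section JoinPrime.
Context {disp : Order.disp_t} {L : finTBDistrLatticeType disp}.
Local Open Scope order_scope.
Implicit Types (x y z j : L).

Definition join_prime j := j != \bot /\ forall x y, j <= x `|` y -> j <= x \/ j <= y.

Lemma join_prime_leU j x y : join_prime j -> (j <= x `|` y) = (j <= x) || (j <= y).
Proof.
case=> _ jp; apply/idP/orP => [/jp // | [] le_j].
  exact: lexUl.
exact: lexUr.
Qed.

Lemma join_prime_le_joins j T (r : seq T) (P : pred T) (F : T -> L) :
  join_prime j -> j <= \join_(t <- r | P t) F t -> exists2 t, P t & j <= F t.
Proof.
move=> jp; elim: r => [|t r IH]; first by rewrite big_nil lex0 (negbTE jp.1).
rewrite big_cons; case: ifP => [Pt | _ /IH //].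
by rewrite join_prime_leU // => /orP[j_Ft | /IH //]; exists t.
Qed.

Lemma Lsup_ub I (f : I -> L) i : f i <= Lsup f.
Proof. by apply: (joins_sup (j := f i)); apply/pbP; exists i. Qed.

Lemma join_prime_le_Lsup j I (f : I -> L) :
  join_prime j -> (j <= Lsup f <-> exists i, j <= f i).
Proof.
move=> jp; split => [/(join_prime_le_joins jp)[_ /pbP[i <-] j_fi] | [i j_fi]].
  by exists i.
exact: le_trans j_fi (Lsup_ub f i).
Qed.

Lemma le_LinfP I (f : I -> L) y : y <= Linf f <-> forall i, y <= f i.
Proof.
split=> [y_le i | le_y]; last by apply/meetsP => _ /pbP[i <-].
by apply: (le_trans y_le); apply: (meets_inf (j := f i)); apply/pbP; exists i.
Qed.

Lemma not_join_prime_split x : x != \bot -> ~ join_prime x ->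
  exists y z, [/\ y < x, z < x & x = y `|` z].
Proof.
move=> x_neq0 not_jp.
have [y [z [x_le nxy nxz]]] : exists y z, [/\ x <= y `|` z, ~~ (x <= y) & ~~ (x <= z)].
  apply: NNPP => none; apply: not_jp; split=> // y z x_le.
  have [|nxy] := boolP (x <= y); first by left.
  have [|nxz] := boolP (x <= z); first by right.
  by case: none; exists y, z.
have ltI w : ~~ (x <= w) -> x `&` w < x by move=> nxw; rewrite lt_neqAle eq_meetl nxw leIl.
exists (x `&` y), (x `&` z); split; [exact: ltI | exact: ltI |].
by rewrite -meetUr; apply/esym/meet_idPl.
Qed.

Lemma le_of_join_prime x y : (forall j, join_prime j -> j <= x -> j <= y) -> x <= y.
Proof.
move=> sub; have [n] := ubnP #|[set z | z < x]|.
elim: n x sub => // n IH x sub /ltnSE card_x.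
have [-> | x_neq0] := eqVneq x \bot; first exact: le0x.
have [x_jp | /(not_join_prime_split x_neq0)[z1 [z2 [lt1 lt2 ->]]]] := classic (join_prime x).
  exact: sub.
have below z : z < x -> z <= y.
  move=> lt_zx; apply: IH => [j jp j_z | ]; first exact: sub jp (le_trans j_z (ltW lt_zx)).
  apply: leq_trans card_x; apply: proper_card; apply/properP; split.
    by apply/subsetP => w; rewrite !inE => /lt_trans; apply.
  by exists z; rewrite !inE ?ltxx.
by rewrite leUx !below.
Qed.

Lemma eq_of_join_prime x y : (forall j, join_prime j -> (j <= x <-> j <= y)) -> x = y.
Proof.
by move=> e; apply/le_anti/andP; split; apply: le_of_join_prime => j /e[].
Qed.

End JoinPrime.

Section PathFormulas.
Variable T : Type.

Definition until (P1 P2 : pred T) (l : nat -> T) :=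
  exists i, P2 (l i) /\ forall k, k < i -> P1 (l k).
Definition weak_until (P1 P2 : pred T) (l : nat -> T) :=
  until P1 P2 l \/ forall i, P1 (l i).

Lemma until_cons (P1 P2 : pred T) (l : nat -> T) :
  P1 (l 0) -> until P1 P2 (fun i => l i.+1) -> until P1 P2 l.
Proof. by move=> P1l0 [i [P2i P1k]]; exists i.+1; split=> // -[|k] //; apply: P1k. Qed.

Lemma weak_until_tail (P1 P2 : pred T) (l : nat -> T) :
  ~~ P2 (l 0) -> weak_until P1 P2 l -> P1 (l 0) /\ weak_until P1 P2 (fun i => l i.+1).
Proof.
move=> nP2 [[[|i] [P2i P1k]] | P1l].
- by rewrite P2i in nP2.
- by split; [apply: P1k | left; exists i; split=> // k; apply: (P1k k.+1)].
- by split; [| right=> i]; apply: P1l.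
Qed.

Lemma weak_untilI (P1 P2 : pred T) (l : nat -> T) :
  (forall i, (forall k, k < i -> ~~ P2 (l k)) -> P1 (l i) || P2 (l i)) ->
  weak_until P1 P2 l.
Proof.
move=> step; have [[i P2i] | noP2] := classic (exists i, P2 (l i)).
  left; case: (ex_minnP (ex_intro (fun i => P2 (l i)) i P2i)) => {P2i}i P2i min_i.
  have nP2 k : k < i -> ~~ P2 (l k).
    by move=> lt_ki; apply/negP => /min_i; rewrite leqNgt lt_ki.
  exists i; split=> // k lt_ki.
  have := step k (fun k' lt_k'k => nP2 k' (ltn_trans lt_k'k lt_ki)).
  by rewrite (negbTE (nP2 k lt_ki)) orbF.
have nP2 k : ~~ P2 (l k) by apply/negP => P2k; apply: noP2; exists k.
by right=> i; have := step i (fun k _ => nP2 k); rewrite (negbTE (nP2 i)) orbF.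
Qed.

Lemma not_until (P1 P2 : pred T) (l : nat -> T) :
  ~ until P1 P2 l <-> weak_until (predC P2) (predC (predU P1 P2)) l.
Proof.
split=> [nU | W [i [P2i P1k]]].
  have nP2 i : (forall k, k < i -> P1 (l k) || P2 (l k)) -> ~~ P2 (l i).
    elim/ltn_ind: i => i IH before; apply/negP => P2i; apply: nU.
    exists i; split=> // k lt_ki; have := before k lt_ki.
    by rewrite (negbTE (IH k lt_ki (fun k' lt => before k' (ltn_trans lt lt_ki)))) orbF.
  apply: weak_untilI => i before; rewrite /= nP2 // => k /before.
  by rewrite /= negbK.
case: W => [[k [/= nP12 nP2]] | /(_ i) /=]; last by rewrite P2i.
have [lt_ki | lt_ik | eq_ki] := ltngtP k i.
- by move: nP12; rewrite P1k.
- by move: (nP2 i lt_ik); rewrite /= P2i.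
- by move: nP12; rewrite eq_ki P2i orbT.
Qed.

Lemma not_weak_until (P1 P2 : pred T) (l : nat -> T) :
  ~ weak_until P1 P2 l <-> until (predC P2) (predC (predU P1 P2)) l.
Proof.
split=> [nW | U [Ul | P1l]].
- have [] // := (not_until P1 P2 l).1 (fun Ul => nW (or_introl Ul)) => nP2.
  have [i nP1i] : exists i, ~~ P1 (l i).
    by apply: NNPP => h; apply: nW; right=> i; apply: contraT => nP1; case: h; exists i.
  exists i; split=> [|k _] /=; last exact: nP2.
  by rewrite negb_or nP1i; apply: nP2.
- exact: (not_until P1 P2 l).2 (or_introl U) Ul.
- by case: U => i [/= /norP[nP1 _] _]; rewrite P1l in nP1.
Qed.

End PathFormulas.

Section Game.
Context {disp : Order.disp_t} {L : finTBDistrLatticeType disp} (M : mvCGS L).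
Local Notation prefix := Defs.prefix. (* not [seq.prefix] *)
Local Notation path := (nat -> St M).
Local Notation profile := (Agt M -> Act M).
Implicit Types (A : {set Agt M}) (s : strat M) (l : path) (q x : St M).

Lemma hlast_prefix l i : hlast (prefix l i) = l i.
Proof.
rewrite /hlast /Defs.prefix /=; case: i => [//|i].
by rewrite -addn1 iotaD map_cat last_cat /= add0n addn1.
Qed.

Lemma prefixS l i : prefix l i.+1 = (l 0, rcons (prefix l i).2 (l i.+1)).
Proof.
have iotaS : iota 0 i.+1 = rcons (iota 0 i) i by rewrite -cats1 -addn1 iotaD.
by rewrite /Defs.prefix iotaS map_rcons.
Qed.

Lemma exists_path_succ q (next : hist M -> St M) :
  exists l, l 0 = q /\ forall i, l i.+1 = next (prefix l i).
Proof.
pose fix unroll n : hist M :=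
  if n is n'.+1 then (q, rcons (unroll n').2 (next (unroll n'))) else (q, [::]).
exists (fun i => hlast (unroll i)).
have prefix_unroll n : prefix (fun i => hlast (unroll i)) n = unroll n.
  by elim: n => [|n IH] //; rewrite prefixS IH /hlast /= last_rcons.
by split=> // i; rewrite prefix_unroll /hlast /= last_rcons.
Qed.

Definition default_act a x : Act M := xchoose (set0Pn _ (avail_nonempty a x)).

Lemma default_actP a x : default_act a x \in avail a x.
Proof. exact: xchooseP. Qed.

Definition extends A x (beta alpha : profile) :=
  (forall a, alpha a \in avail a x) /\ (forall a, a \in A -> alpha a = beta a).

Definition forces A x (beta : profile) (X : St M -> Prop) :=
  forall alpha, extends A x beta alpha -> X (trans x alpha).

Definition cpre A (X : St M -> Prop) x :=
  exists2 beta : profile, (forall a, a \in A -> beta a \in avail a x) & forces A x beta X.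

Lemma not_forces A x beta X :
  ~ forces A x beta X -> exists2 alpha, extends A x beta alpha & ~ X (trans x alpha).
Proof.
move=> nf; apply: NNPP => none; apply: nf => alpha ext.
by apply: NNPP => nX; apply: none; exists alpha.
Qed.

Lemma out_forces A s q l i (X : St M -> Prop) :
  out q A s l -> forces A (l i) (s^~ (prefix l i)) X -> X (l i.+1).
Proof. by case=> _ /(_ i) [alpha [av [agree ->]]]; apply. Qed.

Lemma exists_out_toward A s q (Y : St M -> Prop) : pr_strat A s ->
  exists l, out q A s l /\ forall i,
    (exists2 alpha, extends A (l i) (s^~ (prefix l i)) alpha & Y (trans (l i) alpha)) ->
    Y (l i.+1).
Proof.
move=> prs.
have choose_succ h : exists alpha, extends A (hlast h) (s^~ h) alpha /\
    ((exists2 alpha', extends A (hlast h) (s^~ h) alpha' & Y (trans (hlast h) alpha')) ->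
     Y (trans (hlast h) alpha)).
  have [[alpha ext Yalpha] | none] :=
    classic (exists2 alpha, extends A (hlast h) (s^~ h) alpha & Y (trans (hlast h) alpha)).
    by exists alpha.
  exists (fun a => if a \in A then s a h else default_act a (hlast h)).
  split=> //; split=> a; last by move->.
  by case: ifP => [aA | _]; [apply: prs | apply: default_actP].
have [pick pickP] := choice _ choose_succ.
have [l [l0 lS]] := exists_path_succ q (fun h => trans (hlast h) (pick h)).
have step i : extends A (l i) (s^~ (prefix l i)) (pick (prefix l i)) /\
    ((exists2 alpha, extends A (l i) (s^~ (prefix l i)) alpha & Y (trans (l i) alpha)) ->
     Y (l i.+1)).
  by rewrite lS -(hlast_prefix l i); apply: pickP.
exists l; split=> [|i]; last exact: (step i).2.
split=> // i; exists (pick (prefix l i)); have [[av agree] _] := step i.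
by rewrite lS hlast_prefix.
Qed.

Definition ml_avail A (m : Agt M -> St M -> Act M) :=
  forall a, a \in A -> forall x, m a x \in avail a x.

Lemma ml_choice A (R : St M -> profile -> Prop) :
  (forall x, exists2 beta, (forall a, a \in A -> beta a \in avail a x) & R x beta) ->
  exists2 m, ml_avail A m & forall x, R x (m^~ x).
Proof.
move=> H; have /choice[beta betaP] : forall x, exists beta,
    (forall a, a \in A -> beta a \in avail a x) /\ R x beta.
  by move=> x; have [beta ? ?] := H x; exists beta.
by exists (fun a x => beta x a) => [a aA x | x]; [apply: (betaP x).1 | apply: (betaP x).2].
Qed.

Definition mlstrat (m : Agt M -> St M -> Act M) : strat M := fun a h => m a (hlast h).

Lemma ml_stratP A m : ml_avail A m -> ml_strat A (mlstrat m).
Proof. by exists m. Qed.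

Lemma pr_strat_ml A s : ml_strat A s -> pr_strat A s.
Proof. by case=> m [m_av ->] a aA h; apply: m_av. Qed.

Lemma out_ml_forces A m q l i (X : St M -> Prop) :
  out q A (mlstrat m) l -> forces A (l i) (m^~ (l i)) X -> X (l i.+1).
Proof.
by move=> ol; have := out_forces (i := i) (X := X) ol; rewrite /mlstrat hlast_prefix.
Qed.

Lemma out_ml_tail A m q l :
  out q A (mlstrat m) l -> out (l 1) A (mlstrat m) (fun i => l i.+1).
Proof.
case=> _ ol; split=> // i; have [alpha [av [agree ->]]] := ol i.+1.
by exists alpha; split=> //; split=> // a aA; rewrite agree // /mlstrat !hlast_prefix.
Qed.

Definition cons_path x l : path := fun n => if n is n'.+1 then l n' else x.

Definition strat_after x s : strat M := fun a h => s a (x, h.1 :: h.2).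

Lemma pr_strat_after A s x : pr_strat A s -> pr_strat A (strat_after x s).
Proof. by move=> prs a aA h; apply: (prs a aA (x, h.1 :: h.2)). Qed.

Lemma prefix_cons x l i :
  prefix (cons_path x l) i.+1 = (x, (prefix l i).1 :: (prefix l i).2).
Proof.
rewrite /Defs.prefix /=; congr (_, _ :: _).
by rewrite -[1]/(1 + 0) iotaDl -map_comp; apply: eq_map => j /=; rewrite add1n.
Qed.

Lemma out_cons A s x alpha l :
  extends A x (s^~ (x, [::])) alpha -> out (trans x alpha) A (strat_after x s) l ->
  out x A s (cons_path x l).
Proof.
move=> [av agree] [l0 ol]; split=> // -[|i]; first by exists alpha; rewrite /= l0.
have [alpha' [av' [agree' e]]] := ol i; exists alpha'; split=> //; split=> // a aA.
by rewrite agree' // prefix_cons.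
Qed.

Definition can_enforce k A q (G : path -> Prop) :=
  exists2 s, is_strat k A s & forall l, out q A s l -> G l.

Definition memoryless_suffices A q (G : path -> Prop) :=
  can_enforce PerfectRecall A q G -> can_enforce Memoryless A q G.

Lemma can_enforce_pr_ml A q G :
  can_enforce Memoryless A q G -> can_enforce PerfectRecall A q G.
Proof. by case=> s /pr_strat_ml; exists s. Qed.

Lemma memoryless_suffices_iff A q (G G' : path -> Prop) :
  (forall l, G l <-> G' l) -> memoryless_suffices A q G' -> memoryless_suffices A q G.
Proof.
move=> GG' suff [s prs win].
have [s' mls' win'] := suff (ex_intro2 _ _ s prs (fun l ol => (GG' l).1 (win l ol))).
by exists s' => // l /win' /GG'.
Qed.

Lemma memoryless_suffices_next A q (P : St M -> Prop) :
  memoryless_suffices A q (fun l => P (l 1)).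
Proof.
case=> s prs win; pose m a x := s a (x, [::]).
exists (mlstrat m); first by apply: ml_stratP => a aA x; apply: (prs a aA (x, [::])).
move=> l [l0 /(_ 0) [alpha [av [agree l1]]]].
have [l' [ol' toward]] := exists_out_toward q (fun y => y = l 1) prs.
suff <- : l' 1 = l 1 by apply: win.
have e0 : l' 0 = l 0 by rewrite (proj1 ol').
apply: (toward 0); exists alpha; rewrite e0 //; split=> // a /agree ->.
by rewrite /Defs.prefix /= e0.
Qed.

Lemma can_enforce_weak_until_step A x (P1 P2 : pred (St M)) :
  can_enforce PerfectRecall A x (weak_until P1 P2) ->
  P2 x \/ P1 x /\ cpre A (fun y => can_enforce PerfectRecall A y (weak_until P1 P2)) x.
Proof.
case=> s prs win; have [P2x | nP2x] := boolP (P2 x); [by left | right].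
have [l [ol _]] := exists_out_toward x (fun _ => True) prs.
split; first by have [] := weak_until_tail (l := l) _ (win l ol); rewrite (proj1 ol).
exists (s^~ (x, [::])) => [a aA | alpha ext]; first exact: (prs a aA (x, [::])).
exists (strat_after x s); first exact: pr_strat_after.
move=> l' ol'.
by have [] := weak_until_tail (l := cons_path x l') nP2x (win _ (out_cons ext ol')).
Qed.

Lemma memoryless_suffices_weak_until A q (P1 P2 : pred (St M)) :
  memoryless_suffices A q (weak_until P1 P2).
Proof.
move=> win_q; pose Z y := can_enforce PerfectRecall A y (weak_until P1 P2).
have [m m_av m_Z] : exists2 m, ml_avail A m & forall x, cpre A Z x -> forces A x (m^~ x) Z.
  apply: (ml_choice (R := fun x beta => cpre A Z x -> forces A x beta Z)) => x.
  have [[beta beta_av beta_Z] | ncpre] := classic (cpre A Z x).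
    by exists beta.
  by exists (fun a => default_act a x) => // a _; apply: default_actP.
exists (mlstrat m); first exact: ml_stratP.
move=> l ol; have Zl i : (forall k, k < i -> ~~ P2 (l k)) -> Z (l i).
  elim: i => [_ | i IH before]; first by rewrite (proj1 ol).
  have [P2i | [_ cZ]] := can_enforce_weak_until_step (IH (fun k lt => before k (ltnW lt))).
    by move: (before i (ltnSn i)); rewrite P2i.
  exact: out_ml_forces ol (m_Z _ cZ).
apply: weak_untilI => i before.
by have [-> | [-> _]] := can_enforce_weak_until_step (Zl i before); rewrite ?orbT.
Qed.

Definition attr_step A (P1 P2 : pred (St M)) (X : {set St M}) : {set St M} :=
  [set x | P2 x || P1 x && pb (cpre A (fun y => y \in X) x)].

Lemma attr_step_mono A P1 P2 : {homo attr_step A P1 P2 : X Y / X \subset Y}.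
Proof.
move=> X Y /subsetP sXY; apply/subsetP => x; rewrite !inE.
case/orP => [-> // | /andP[P1x /pbP[beta beta_av beta_X]]].
apply/orP; right; rewrite P1x; apply/pbP.
by exists beta => // alpha /beta_X /sXY.
Qed.

Lemma until_winning_in_attr A q (P1 P2 : pred (St M)) :
  can_enforce PerfectRecall A q (until P1 P2) -> q \in fixset (attr_step A P1 P2).
Proof.
case=> s prs win; apply: contraT => q_out.
set mu := fixset _ in q_out.
have mu_fix : attr_step A P1 P2 mu = mu := fixsetK (@attr_step_mono A P1 P2).
(* The opponent keeps the play outside [mu] as long as P1 holds. *)
have [l [ol toward]] := exists_out_toward q (fun y => y \notin mu) prs.
have avoid i : (forall k, k < i -> P1 (l k)) -> l i \notin mu.
  elim: i => [_ | i IH before]; first by rewrite (proj1 ol).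
  have nforce : ~ forces A (l i) (s^~ (prefix l i)) (fun y => y \in mu).
    move=> force; have /negP := IH (fun k lt => before k (ltnW lt)); apply.
    rewrite -mu_fix inE (before i (ltnSn i)) /=.
    apply/orP; right; apply/pbP; exists (s^~ (prefix l i)) => // a aA.
    by rewrite -(hlast_prefix l i); apply: prs.
  have [alpha ext out_alpha] := not_forces nforce.
  by apply: toward; exists alpha => //; apply/negP.
have [i [P2i P1k]] := win l ol.
by move: (avoid i P1k); rewrite -mu_fix inE P2i.
Qed.

Lemma ml_until_from_attr A (P1 P2 : pred (St M)) :
  exists2 m, ml_avail A m & forall q l,
    q \in fixset (attr_step A P1 P2) -> out q A (mlstrat m) l -> until P1 P2 l.
Proof.
pose layer n y := y \in iter n (attr_step A P1 P2) set0.
have [m m_av m_layer] : exists2 m, ml_avail A m &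
    forall x n, cpre A (layer n) x -> forces A x (m^~ x) (layer n).
  (* A profile forcing the least layer that x can force into forces all larger ones. *)
  apply: (ml_choice (R := fun x beta =>
    forall n, cpre A (layer n) x -> forces A x beta (layer n))) => x.
  have [[n cn] | none] := classic (exists n, pb (cpre A (layer n) x)); last first.
    exists (fun a => default_act a x) => [a _ | n cn]; first exact: default_actP.
    by case: none; exists n; apply/pbP.
  case: (ex_minnP (ex_intro (fun n => pb (cpre A (layer n) x)) n cn)).
  move=> n0 /pbP[beta beta_av beta_n0] min_n0.
  exists beta => // n' /pbP/min_n0 le_n0 alpha /beta_n0.
  exact/subsetP/(subset_iter (@attr_step_mono A P1 P2) le_n0).
exists m => // q l; rewrite /fixset.
elim: #|St M| q l => [q l | n IH q l]; first by rewrite inE.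
rewrite /= inE => /orP[P2q | /andP[P1q /pbP cq]] ol; first by exists 0; rewrite (proj1 ol).
apply: until_cons; first by rewrite (proj1 ol).
apply: IH (out_ml_tail ol).
by have := out_ml_forces (i := 0) (X := layer n) ol; rewrite (proj1 ol); apply; apply: m_layer.
Qed.

Lemma memoryless_suffices_until A q (P1 P2 : pred (St M)) :
  memoryless_suffices A q (until P1 P2).
Proof.
move=> /until_winning_in_attr q_attr; have [m m_av m_win] := ml_until_from_attr A P1 P2.
by exists (mlstrat m) => [|l]; [apply: ml_stratP | apply: m_win].
Qed.

End Game.

Section Thresholds.
Context {disp : Order.disp_t} {L : finTBDistrLatticeType disp} (M : mvCGS L).
Local Open Scope order_scope.
Local Notation path := (nat -> St M).
Implicit Types (A : {set Agt M}) (q : St M) (k : strat_kind) (j : L).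

Lemma join_prime_le_pU j (f1 f2 : St M -> L) l : join_prime j ->
  (j <= pU f1 f2 l <-> until (fun x => j <= f1 x) (fun x => j <= f2 x) l).
Proof.
move=> jp; rewrite /pU join_prime_le_Lsup //; split=> -[i].
  rewrite lexI => /andP[j_f2 /le_LinfP j_f1]; exists i; split=> // k lt_ki.
  exact: (j_f1 (Ordinal lt_ki)).
by move=> [j_f2 j_f1]; exists i; rewrite lexI j_f2; apply/le_LinfP => k; apply: j_f1.
Qed.

Lemma join_prime_le_pW j (f1 f2 : St M -> L) l : join_prime j ->
  (j <= pW f1 f2 l <-> weak_until (fun x => j <= f1 x) (fun x => j <= f2 x) l).
Proof.
move=> jp; rewrite /pW join_prime_leU //; split.
  by case/orP => [/(join_prime_le_pU _ _ _ jp) | /le_LinfP]; [left | right].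
by case=> [/(join_prime_le_pU _ _ _ jp) | /le_LinfP] ->; rewrite ?orbT.
Qed.

Lemma join_prime_le_Dia k A g q j : join_prime j ->
  (j <= Dia k A g q <-> can_enforce k A q (fun l => j <= g l)).
Proof.
move=> jp; rewrite /Dia join_prime_le_Lsup //; split.
  by case=> -[s sk] /le_LinfP j_g; exists s => // l ol; apply: (j_g (exist _ l ol)).
by case=> s sk j_g; exists (exist _ s sk); apply/le_LinfP => -[l ol]; apply: j_g.
Qed.

Lemma join_prime_le_Box k A g q j : join_prime j ->
  (j <= Box k A g q <-> ~ can_enforce k A q (fun l => ~ j <= g l)).
Proof.
move=> jp; rewrite /Box le_LinfP; split.
  move=> j_g [s sk win].
  by have /(join_prime_le_Lsup _ jp)[[l ol] j_gl] := j_g (exist _ s sk); apply: win l ol j_gl.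
move=> none [s sk]; apply/(join_prime_le_Lsup _ jp); apply: NNPP => nl.
by apply: none; exists s => // l ol j_gl; apply: nl; exists (exist _ l ol).
Qed.

Lemma Dia_memoryless A (g : path -> L) q :
  (forall j, join_prime j -> memoryless_suffices A q (fun l => j <= g l)) ->
  Dia PerfectRecall A g q = Dia Memoryless A g q.
Proof.
move=> suff; apply: eq_of_join_prime => j jp; rewrite !join_prime_le_Dia //.
by split; [apply: suff | apply: can_enforce_pr_ml].
Qed.

Lemma Box_memoryless A (g : path -> L) q :
  (forall j, join_prime j -> memoryless_suffices A q (fun l => ~ j <= g l)) ->
  Box PerfectRecall A g q = Box Memoryless A g q.
Proof.
move=> suff; apply: eq_of_join_prime => j jp; rewrite !join_prime_le_Box //.
by split=> none win; apply: none; [apply: can_enforce_pr_ml | apply: suff].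
Qed.

Lemma DiaX_memoryless A f q : Dia PerfectRecall A (pX f) q = Dia Memoryless A (pX f) q.
Proof.
by apply: Dia_memoryless => j _; apply: (memoryless_suffices_next (P := fun x => j <= f x)).
Qed.

Lemma DiaU_memoryless A f1 f2 q :
  Dia PerfectRecall A (pU f1 f2) q = Dia Memoryless A (pU f1 f2) q.
Proof.
apply: Dia_memoryless => j jp.
apply: (memoryless_suffices_iff (fun l => join_prime_le_pU f1 f2 l jp)).
exact: memoryless_suffices_until.
Qed.

Lemma DiaW_memoryless A f1 f2 q :
  Dia PerfectRecall A (pW f1 f2) q = Dia Memoryless A (pW f1 f2) q.
Proof.
apply: Dia_memoryless => j jp.
apply: (memoryless_suffices_iff (fun l => join_prime_le_pW f1 f2 l jp)).
exact: memoryless_suffices_weak_until.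
Qed.

Lemma BoxX_memoryless A f q : Box PerfectRecall A (pX f) q = Box Memoryless A (pX f) q.
Proof.
by apply: Box_memoryless => j _; apply: (memoryless_suffices_next (P := fun x => ~ j <= f x)).
Qed.

Lemma BoxU_memoryless A f1 f2 q :
  Box PerfectRecall A (pU f1 f2) q = Box Memoryless A (pU f1 f2) q.
Proof.
apply: Box_memoryless => j jp.
apply: (memoryless_suffices_iff (fun l =>
  iff_trans (not_iff_compat (join_prime_le_pU f1 f2 l jp)) (not_until _ _ l))).
exact: memoryless_suffices_weak_until.
Qed.

Lemma BoxW_memoryless A f1 f2 q :
  Box PerfectRecall A (pW f1 f2) q = Box Memoryless A (pW f1 f2) q.
Proof.
apply: Box_memoryless => j jp.
apply: (memoryless_suffices_iff (fun l =>
  iff_trans (not_iff_compat (join_prime_le_pW f1 f2 l jp)) (not_weak_until _ _ l))).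
exact: memoryless_suffices_until.
Qed.

End Thresholds.

Theorem theorem5p19 (disp : Order.disp_t) (L : finTBDistrLatticeType disp)
  (M : mvCGS L) (phi : formula L (AP M) (Agt M)) (q : St M) :
  eval PerfectRecall phi q = eval Memoryless phi q.
Proof.
suff -> : eval PerfectRecall phi = eval Memoryless phi by [].
elim: phi => //= [a -> b -> | a -> b -> | a -> b -> | A a -> | A a -> b -> | A a -> b ->
                 | A a -> | A a -> b -> | A a -> b ->] //;
  apply: functional_extensionality => q'.
- exact: DiaX_memoryless.
- exact: DiaU_memoryless.
- exact: DiaW_memoryless.
- exact: BoxX_memoryless.
- exact: BoxU_memoryless.
- exact: BoxW_memoryless.
Qed.
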